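(* Let $\mathcal E$ be an exchangeability system for a noncommutative probability space $(\mathcal A,\phi)$ and $X_1,\dots,X_n\in\mathcal A$. Then $$K_n(X_1,\dots,X_n)=\sum_{\pi\in\Pi_n}\phi_\pi(X_1,\dots,X_n)\,\mu(\pi,\hat1_n),$$ where $\mu$ is the Möbius function of the partition lattice $\Pi_n$.
   Context: A noncommutative probability space is a pair $(\mathcal A,\phi)$ of a complex unital algebra $\mathcal A$ and a unital linear functional $\phi$. An exchangeability system $\mathcal E$ for $(\mathcal A,\phi)$ consists of a noncommutative probability space $(\mathcal U,\tilde\phi)$ and a family $(\iota_k)_{k\in\mathbb N}$ of embeddings (injective unital algebra homomorphisms) $\iota_k:\mathcal A\to\mathcal A_k\subseteq\mathcal U$ with $\tilde\phi\circ\iota_k=\phi$; write $X^{(k)}=\iota_k(X)$. It is required that for all $X_1,\dots,X_n\in\mathcal A$, all indices $i_1,\dots,i_n\in\mathbb N$ and every bijection $\sigma$ of $\mathbb N$, $\tilde\phi(X_1^{(i_1)}\cdots X_n^{(i_n)})=\tilde\phi(X_1^{(\sigma(i_1))}\cdots X_n^{(\sigma(i_n))})$; so this value depends only on the kernel of $h:j\mapsto i_j$ (the partition of $[n]=\{1,\dots,n\}$ into the level sets of $h$), and for a partition $\pi$ it is denoted $\phi_\pi(X_1,\dots,X_n)$. $\Pi_n$ is the lattice of set partitions of $[n]$ ordered by refinement, $\hat1_n$ its maximal element (one block). For a primitive $n$-th root of unity $\omega$ put $X_j^\omega=\sum_{k=1}^n\omega^kX_j^{(k)}$ and $K_n(X_1,\dots,X_n)=\frac1n\tilde\phi(X_1^\omega\cdots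 X_n^\omega)$. *)

From HB Require Import structures.
From mathcomp Require Import all_boot all_order all_algebra.
Set Implicit Arguments. Unset Strict Implicit. Unset Printing Implicit Defensive.
Import Order.TTheory GRing.Theory Num.Theory.
Local Open Scope ring_scope.

Section Defs.
Variable C : numClosedFieldType.

Definition unital_functional (A : algType C) (f : A -> C) : Prop :=
  (forall (a : C) (x y : A), f (a *: x + y) = a * f x + f y) /\ f 1 = 1.

Definition embedding (A U : algType C) (g : A -> U) : Prop :=
  [/\ injective g,
      (forall (a : C) (x y : A), g (a *: x + y) = a *: g x + g y),
      (forall x y : A, g (x * y) = g x * g y) & g 1 = 1].

Definition exchangeable (A U : algType C) (phit : U -> C)
    (iota : nat -> A -> U) : Prop :=
  forall (n : nat) (X : 'I_n -> A) (i : 'I_n -> nat) (sigma : nat -> nat),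
    bijective sigma ->
    phit (\prod_(j < n) iota (i j) (X j)) =
    phit (\prod_(j < n) iota (sigma (i j)) (X j)).

Definition exchangeability_system (A U : algType C) (phi : A -> C)
    (phit : U -> C) (iota : nat -> A -> U) : Prop :=
  [/\ unital_functional phit,
      (forall k, embedding (iota k)),
      (forall k x, phit (iota k x) = phi x) & exchangeable phit iota].

Definition set_partitions (n : nat) : {set {set {set 'I_n}}} :=
  [set P : {set {set 'I_n}} | partition P [set: 'I_n]].

Definition refines (n : nat) (P Q : {set {set 'I_n}}) : bool :=
  [forall B in P, exists D in Q, B \subset D].

(** The maximal partition (one block), for n >= 1. *)
Definition hat1 (n : nat) : {set {set 'I_n}} := [set [set: 'I_n]].

(** Moebius function of a finite poset (D, le), D : {set T}, by the usual
    recursion mu(x,x)=1, mu(x,y) = - sum_{x <= z < y} mu(x,z) for x < y,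
    mu(x,y)=0 otherwise; [k] is fuel, and #|T| suffices. *)
Fixpoint mobius_fuel (T : finType) (D : {set T}) (le : rel T) (k : nat)
    (x y : T) : C :=
  if x == y then 1 else
  match k with
  | 0 => 0
  | k'.+1 =>
    if le x y then
      - \sum_(z in D | le x z && le z y && (z != y)) mobius_fuel D le k' x z
    else 0
  end.

Definition mobius (T : finType) (D : {set T}) (le : rel T) (x y : T) : C :=
  mobius_fuel D le #|T| x y.

Definition mobius_Pi (n : nat) (P Q : {set {set 'I_n}}) : C :=
  mobius (set_partitions n) (@refines n) P Q.

(** Canonical index map h_P : j |-> number of the block of P containing j;
    its kernel is P (for P a partition). *)
Definition block_index (n : nat) (P : {set {set 'I_n}}) (j : 'I_n) : nat :=
  index (pblock P j) (enum P).

(** phi_pi(X_1,...,X_n) = phit(X_1^{(h 1)} ... X_n^{(h n)}) with ker h = pi. *)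
Definition phi_pi (A U : algType C) (phit : U -> C) (iota : nat -> A -> U)
    (n : nat) (P : {set {set 'I_n}}) (X : 'I_n -> A) : C :=
  phit (\prod_(j < n) iota (block_index P j) (X j)).

Definition X_omega (A U : algType C) (iota : nat -> A -> U) (n : nat)
    (w : C) (x : A) : U :=
  \sum_(1 <= k < n.+1) (w ^+ k) *: iota k x.

Definition K_n (A U : algType C) (phit : U -> C) (iota : nat -> A -> U)
    (n : nat) (w : C) (X : 'I_n -> A) : C :=
  n%:R^-1 * phit (\prod_(j < n) X_omega iota n w (X j)).

End Defs.

(* Expanding the product, K_n is n^-1 times the sum over all f : [n] -> [n] of
   omega^(sum_j (f j + 1)) phit(X_1^(f 1 + 1) ... X_n^(f n + 1)), and by
   exchangeability the phit-factor is phi_pi with pi = ker f.  Grouping by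
   kernels, it remains to show S(pi) := sum_(ker f = pi) omega^(...) = n mu(pi, 1).
   Summing S over the partitions coarser than sigma gives the sum over the f
   constant on the blocks of sigma, which is n for sigma = 1 and 0 otherwise;
   Moebius inversion then yields S(pi) = n mu(pi, 1). *)

From mathcomp Require Import all_boot all_order all_algebra.
Import GRing.Theory Num.Theory.
Local Open Scope ring_scope.
Set Implicit Arguments. Unset Strict Implicit.

Section Mobius.
Variables (C : numClosedFieldType) (T : finType) (D : {set T}) (le : rel T).
Hypothesis refl_le : forall x, le x x.
Hypothesis trans_le : forall {x y z}, le x y -> le y z -> le x z.
Hypothesis anti_le : forall x y, x \in D -> y \in D -> le x y -> le y x -> x = y.

Let lower x y := [set z in D | le x z && le z y && (z != y)].

Let card_lower_lt x y z : z \in D -> y \in D -> le x z -> le z y -> z != y ->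
  (#|lower x z| < #|lower x y|)%N.
Proof.
move=> zD yD xz zy zNy; apply/proper_card/properP; split.
  apply/subsetP => t; rewrite !inE => /andP[-> /andP[/andP[xt tz] tNz]] /=.
  rewrite xt (trans_le tz zy) /=; apply: contra zNy => /eqP ty.
  by subst t; rewrite (anti_le zD yD zy tz).
by exists z; rewrite !inE ?zD ?xz ?zy ?zNy ?eqxx //= andbF.
Qed.

Let card_lower_ltT x y : (#|lower x y| < #|T|)%N.
Proof.
apply/proper_card/properP; split; first exact: subset_predT.
by exists y => //; rewrite !inE eqxx !andbF.
Qed.

Let mobius_fuel_enough k1 k2 x y : y \in D ->
  (#|lower x y| < k1)%N -> (#|lower x y| < k2)%N ->
  mobius_fuel C D le k1 x y = mobius_fuel C D le k2 x y.
Proof.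
elim: k1 k2 x y => [//|k1 IH] [//|k2] x y yD lt1 lt2 /=.
case: (x == y) => //; case: (le x y) => //; congr (- _).
apply: eq_bigr => z /andP[zD /andP[/andP[xz zy] zNy]].
have ltz := card_lower_lt zD yD xz zy zNy.
by apply: IH => //; apply: leq_trans ltz _; rewrite -ltnS.
Qed.

Lemma mobius_refl x : mobius C D le x x = 1.
Proof. by rewrite /mobius; case: #|T| => [|k] /=; rewrite eqxx. Qed.

Lemma mobiusE x y : y \in D -> le x y -> x != y ->
  mobius C D le x y =
  - \sum_(z in D | le x z && le z y && (z != y)) mobius C D le x z.
Proof.
move=> yD xy xNy; have := card_lower_ltT x y.
rewrite {1}/mobius; case cardT: #|T| => [//|k] ltk /=.
rewrite (negbTE xNy) xy; congr (- _).
apply: eq_bigr => z /andP[zD /andP[/andP[xz zy] zNy]].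
rewrite /mobius cardT; apply: mobius_fuel_enough => //; last first.
  by rewrite -cardT card_lower_ltT.
by apply: leq_trans (card_lower_lt zD yD xz zy zNy) _; rewrite -ltnS.
Qed.

Lemma sum_mobius x y : x \in D -> y \in D -> le x y ->
  \sum_(z in D | le x z && le z y) mobius C D le x z = (x == y)%:R.
Proof.
move=> xD yD xy; have [<-|xNy] := eqVneq x y.
  rewrite (big_pred1 x) ?mobius_refl // => z; rewrite /= andbA.
  apply/idP/eqP => [/andP[/andP[zD xz] zx]|->]; first exact: anti_le.
  by rewrite xD refl_le.
rewrite (bigD1 y) /=; last by rewrite yD xy refl_le.
rewrite mobiusE // addrC; apply/eqP; rewrite subr_eq0; apply/eqP.
by apply: eq_bigl => z; rewrite !andbA.
Qed.

Lemma mobius_inversion x (F : T -> C) : x \in D ->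
  \sum_(z in D | le x z) mobius C D le x z * \sum_(q in D | le z q) F q = F x.
Proof.
move=> xD; under eq_bigr do rewrite mulr_sumr.
rewrite (exchange_big_dep (mem D)) /=; last by move=> ? ? _ /andP[].
rewrite (bigD1 x) //= [X in _ + X]big1 ?addr0.
  rewrite -mulr_suml -[RHS]mul1r; congr (_ * _).
  transitivity ((x == x)%:R : C); last by rewrite eqxx.
  rewrite -(sum_mobius xD xD (refl_le x)).
  by apply: eq_bigl => z; rewrite xD /= andbA.
move=> q /andP[qD qNx]; rewrite -mulr_suml.
have [xq|xNq] := boolP (le x q).
  rewrite -[X in X * _](_ : \sum_(z in D | le x z && le z q) mobius C D le x z = _).
    by rewrite sum_mobius // eq_sym (negbTE qNx) mul0r.
  by apply: eq_bigl => z; rewrite qD /= andbA.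
rewrite big_pred0 ?mul0r // => z; apply/negP => /andP[/andP[_ xz] /andP[_ zq]].
by rewrite (trans_le xz zq) in xNq.
Qed.

End Mobius.

Section PartitionLattice.
Variable n : nat.
Local Notation Pi := (set_partitions n).
Implicit Types P Q R Z : {set {set 'I_n}}.

Lemma in_set_partitions P : (P \in Pi) = partition P [set: 'I_n].
Proof. by rewrite inE. Qed.

Lemma refines_refl P : refines P P.
Proof. by apply/forall_inP => B PB; apply/exists_inP; exists B. Qed.

Lemma refines_trans P Q R : refines P Q -> refines Q R -> refines P R.
Proof.
move=> /forall_inP PQ /forall_inP QR; apply/forall_inP => B /PQ /exists_inP[D QD BD].
have /exists_inP[E RE DE] := QR D QD.
by apply/exists_inP; exists E => //; apply: subset_trans BD DE.
Qed.

Lemma refines_anti P Q : P \in Pi -> Q \in Pi -> refines P Q -> refines Q P -> P = Q.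
Proof.
suff sub R S : R \in Pi -> refines R S -> refines S R -> R \subset S.
  by move=> PPi QPi PQ QP; apply/eqP; rewrite eqEsubset !sub.
rewrite in_set_partitions => /and3P[_ tR R0] /forall_inP RS /forall_inP SR.
apply/subsetP => B RB; have /exists_inP[D SD BD] := RS B RB.
have /exists_inP[B' RB' DB'] := SR D SD.
have /set0Pn[x xB] : B != set0 by apply: contraNneq R0 => <-.
suff BB' : B = B' by rewrite (_ : B = D) //; apply/eqP; rewrite eqEsubset BD BB'.
by rewrite -(def_pblock tR RB xB) (def_pblock tR RB' (subsetP DB' x (subsetP BD x xB))).
Qed.

Lemma refines_hat1 P : refines P (hat1 n).
Proof. by apply/forall_inP => B _; apply/exists_inP; exists [set: 'I_n]; rewrite ?inE ?subsetT. Qed.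

Lemma hat1_partition : (0 < n)%N -> hat1 n \in Pi.
Proof.
move=> n_gt0; rewrite in_set_partitions /partition cover1 eqxx trivIset1 /= inE.
by apply/eqP => /setP /(_ (Ordinal n_gt0)); rewrite !inE.
Qed.

Lemma proper_block_neq_hat1 Z : (0 < n)%N -> Z \in Pi -> Z != hat1 n ->
  exists2 B, B \in Z & B \proper [set: 'I_n].
Proof.
move=> n_gt0; rewrite in_set_partitions => /and3P[/eqP coverZ _ _] Zn1.
have [/exists_inP[B ZB BT]|] := boolP [exists B in Z, B != [set: 'I_n]].
  by exists B; rewrite // properEneq BT subsetT.
move/exists_inPn => ZT; case/eqP: Zn1; apply/setP => B; rewrite inE.
apply/idP/eqP => [ZB|->]; first by apply/eqP; rewrite -[_ == _]negbK ZT.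
have /bigcupP[B' ZB' _] : Ordinal n_gt0 \in cover Z by rewrite coverZ inE.
by have /negPn/eqP <- := ZT B' ZB'.
Qed.

Lemma pblock_mem_block Z B i j : Z \in Pi -> B \in Z -> j \in pblock Z i ->
  (j \in B) = (i \in B).
Proof.
rewrite in_set_partitions => /and3P[/eqP coverZ tZ _] ZB jZi.
have Zj_Zi : pblock Z j = pblock Z i by apply: same_pblock.
have iZi : i \in pblock Z i by rewrite mem_pblock coverZ inE.
apply/idP/idP => [jB|iB]; first by rewrite -(def_pblock tZ ZB jB) Zj_Zi.
by rewrite -(def_pblock tZ ZB iB).
Qed.

Definition ker_partition (rT : eqType) (f : 'I_n -> rT) := preim_partition f [set: 'I_n].

Lemma ker_partitionP (rT : eqType) (f : 'I_n -> rT) : ker_partition f \in Pi.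
Proof. by rewrite in_set_partitions; apply: preim_partitionP. Qed.

Lemma mem_pblock_ker (rT : eqType) (f : 'I_n -> rT) i j :
  (j \in pblock (ker_partition f) i) = (f i == f j).
Proof.
apply: pblock_equivalence_partition; rewrite ?inE //.
by move=> x y z _ _ _; split=> // /eqP->.
Qed.

Lemma refines_kerP (rT : eqType) Z (f : 'I_n -> rT) : Z \in Pi ->
  reflect (forall i j, j \in pblock Z i -> f i = f j) (refines Z (ker_partition f)).
Proof.
rewrite in_set_partitions => /and3P[/eqP coverZ tZ Z0].
have /and3P[/eqP coverK tK _] := preim_partitionP f [set: 'I_n].
apply: (iffP forall_inP) => [ZK i j jZi|fZ B ZB].
  have iZ : i \in cover Z by rewrite coverZ inE.
  have /exists_inP[D KD ZiD] := ZK _ (pblock_mem iZ).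
  have iD : i \in D by apply: (subsetP ZiD); rewrite mem_pblock.
  by apply/eqP; rewrite -mem_pblock_ker (def_pblock tK KD iD) (subsetP ZiD).
have /set0Pn[i iB] : B != set0 by apply: contraNneq Z0 => <-.
have iK : i \in cover (ker_partition f) by rewrite coverK inE.
apply/exists_inP; exists (pblock (ker_partition f) i); first exact: pblock_mem.
apply/subsetP => j jB; rewrite mem_pblock_ker; apply/eqP/fZ.
by rewrite (def_pblock tZ ZB iB).
Qed.

Lemma sum_refining_ker (R : nmodType) (rT : finType) Z (F : {ffun 'I_n -> rT} -> R) :
  \sum_(Q in Pi | refines Z Q) \sum_(f : {ffun 'I_n -> rT} | ker_partition f == Q) F f =
  \sum_(f : {ffun 'I_n -> rT} | refines Z (ker_partition f)) F f.
Proof.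
rewrite [RHS](partition_big (fun f : {ffun 'I_n -> rT} => ker_partition f)
                            (fun Q => (Q \in Pi) && refines Z Q)) /=.
  by apply: eq_bigr => Q /andP[_ ZQ]; apply: eq_bigl => f; case: eqP => [->|_]; rewrite ?ZQ ?andbF.
by move=> f ->; rewrite ker_partitionP.
Qed.

Lemma block_index_eq P i j : P \in Pi ->
  (block_index P i == block_index P j) = (j \in pblock P i).
Proof.
rewrite in_set_partitions => /and3P[/eqP coverP tP _].
have mem_enum_pblock k : pblock P k \in enum P.
  by rewrite mem_enum pblock_mem // coverP inE.
rewrite /block_index (inj_in_eq (@index_inj _ set0 _)) ?mem_enum_pblock //.
by rewrite eq_pblock // coverP inE.
Qed.

End PartitionLattice.

Definition swap_values (T : eqType) (a b x : T) : T :=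
  if x == a then b else if x == b then a else x.

Lemma swap_valuesK (T : eqType) (a b : T) : involutive (swap_values a b).
Proof.
move=> x; rewrite /swap_values.
have [->|xNa] := eqVneq x a; first by rewrite eqxx; case: eqVneq => // ->.
have [->|xNb] := eqVneq x b; first by rewrite eqxx.
by rewrite (negbTE xNa) (negbTE xNb).
Qed.

Lemma bijective_extension (I : finType) (h b : I -> nat) :
  (forall i j, (h i == h j) = (b i == b j)) ->
  exists2 sigma : nat -> nat, bijective sigma & forall i, sigma (h i) = b i.
Proof.
move=> hb; suff [sigma bij_sigma sigma_hb] : exists2 sigma : nat -> nat,
    bijective sigma & {in enum I, forall i, sigma (h i) = b i}.
  by exists sigma => // i; rewrite sigma_hb ?mem_enum.
elim: (enum I) => [|i s [sigma bij_sigma sigma_hb]]; first by exists id => //; exists id.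
have [/hasP[j js /eqP hji]|hiNs] := boolP (has (fun j => h j == h i) s).
  exists sigma => // k /predU1P[->|/sigma_hb //].
  by rewrite -hji sigma_hb //; apply/eqP; rewrite -hb hji.
exists (swap_values (sigma (h i)) (b i) \o sigma).
  by apply: bij_comp => //; exists (swap_values (sigma (h i)) (b i)); apply: swap_valuesK.
move=> k /predU1P[->|ks] /=; first by rewrite /swap_values eqxx.
have hkNi : h k != h i by apply: contra hiNs => hki; apply/hasP; exists k.
have bkNi : b k != b i by rewrite -hb.
have bkNs : b k != sigma (h i).
  by rewrite -(sigma_hb k ks) (inj_eq (bij_inj bij_sigma)).
by rewrite (sigma_hb k ks) /swap_values (negbTE bkNs) (negbTE bkNi).
Qed.

Section Exchangeable.
Variables (C : numClosedFieldType) (A U : algType C).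
Variables (phit : U -> C) (iota : nat -> A -> U).
Hypothesis exch : exchangeable phit iota.

Lemma exchangeable_kernel n (X : 'I_n -> A) (h b : 'I_n -> nat) :
  (forall i j, (h i == h j) = (b i == b j)) ->
  phit (\prod_(j < n) iota (h j) (X j)) = phit (\prod_(j < n) iota (b j) (X j)).
Proof.
move=> hb; have [sigma bij_sigma sigma_hb] := bijective_extension hb.
by rewrite (exch X h bij_sigma); congr phit; apply: eq_bigr => j _; rewrite sigma_hb.
Qed.

Lemma phi_pi_kernel n (X : 'I_n -> A) (h : 'I_n -> nat) P :
  P \in set_partitions n -> (forall i j, (h i == h j) = (j \in pblock P i)) ->
  phit (\prod_(j < n) iota (h j) (X j)) = phi_pi phit iota P X.
Proof.
by move=> PPi hP; apply: exchangeable_kernel => i j; rewrite block_index_eq.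
Qed.

End Exchangeable.

Section RootOfUnitySums.
Variables (C : numClosedFieldType) (n : nat) (w : C).
Hypotheses (n_gt0 : (0 < n)%N) (w_prim : n.-primitive_root w).
Local Notation Pi := (set_partitions n).

Definition omega_monomial (f : {ffun 'I_n -> 'I_n}) : C := \prod_(j < n) w ^+ (f j).+1.

Lemma sum_omega_constant :
  \sum_(f : {ffun 'I_n -> 'I_n} | refines (hat1 n) (ker_partition f)) omega_monomial f = n%:R.
Proof.
have in_hat1 i j : j \in pblock (hat1 n) i by rewrite (@def_pblock _ _ setT) ?trivIset1 ?inE.
have hat1P := hat1_partition n_gt0; pose i0 := Ordinal n_gt0.
rewrite (partition_big (fun f : {ffun 'I_n -> 'I_n} => f i0) xpredT) //=.
rewrite -[n in RHS]card_ord -sumr_const; apply: eq_bigr => k _.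
rewrite (big_pred1 [ffun=> k]) => [|f /=]; last first.
  apply/andP/eqP => [[/(refines_kerP _ hat1P) f_const /eqP <-]|->].
    by apply/ffunP => j; rewrite ffunE (f_const i0 j (in_hat1 i0 j)).
  rewrite ffunE eqxx; split=> //.
  by apply/(refines_kerP _ hat1P) => i j _; rewrite !ffunE.
rewrite /omega_monomial; under eq_bigr do rewrite ffunE.
by rewrite prodr_const card_ord -exprM mulnC exprM (prim_expr_order w_prim) expr1n.
Qed.

(* Shifting [f] by one on a proper block [B] of [Z] permutes the summation
   domain and multiplies each term by [w ^+ #|B|], which is not [1]. *)
Lemma sum_omega_proper Z : Z \in Pi -> Z != hat1 n ->
  \sum_(f : {ffun 'I_n -> 'I_n} | refines Z (ker_partition f)) omega_monomial f = 0.
Proof.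
move=> ZPi Zn1; have [B ZB BT] := proper_block_neq_hat1 n_gt0 ZPi Zn1.
have wB : w ^+ #|B| != 1.
  have /and3P[_ _ Z0] : partition Z [set: 'I_n] by rewrite -in_set_partitions.
  have B_gt0 : (0 < #|B|)%N by rewrite card_gt0; apply: contraNneq Z0 => <-.
  have B_ltn : (#|B| < n)%N by rewrite -[n in (_ < n)%N]card_ord -cardsT proper_card.
  rewrite -(prim_order_dvd w_prim); apply: contraL B_ltn => /(dvdn_leq B_gt0).
  by rewrite -leqNgt.
pose shift (f : {ffun 'I_n -> 'I_n}) := [ffun j => if j \in B then ordS (f j) else f j].
have shiftK : cancel shift (fun f => [ffun j => if j \in B then ord_pred (f j) else f j]).
  by move=> f; apply/ffunP => j; rewrite !ffunE; case: (j \in B); rewrite ?ordSK.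
have refines_shift f : refines Z (ker_partition (shift f)) = refines Z (ker_partition f).
  apply/(refines_kerP _ ZPi)/(refines_kerP _ ZPi) => fZ i j jZi; have := fZ i j jZi;
    rewrite !ffunE (pblock_mem_block ZPi ZB jZi); case: (i \in B) => //.
    exact: (can_inj (@ordSK n)).
  by move->.
have omega_shift f : omega_monomial (shift f) = omega_monomial f * w ^+ #|B|.
  rewrite /omega_monomial -prodr_const (big_mkcond (fun j => j \in B)) -big_split /=.
  apply: eq_bigr => j _; rewrite ffunE; case: (j \in B); last by rewrite mulr1.
  by rewrite exprS expr_mod ?(prim_expr_order w_prim) // -exprSr.
set S := \sum_(f | _) _; have : S = S * w ^+ #|B|.
  rewrite {1}/S (reindex_inj (can_inj shiftK)) /= mulr_suml.
  by apply: eq_big => f; rewrite ?refines_shift ?omega_shift.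
move/eqP; rewrite -subr_eq0 -{1}[S]mulr1 -mulrBr mulf_eq0 subr_eq0.
by rewrite [1 == _]eq_sym (negbTE wB) orbF => /eqP.
Qed.

Lemma sum_omega_ker P : P \in Pi ->
  \sum_(f : {ffun 'I_n -> 'I_n} | ker_partition f == P) omega_monomial f =
  n%:R * mobius_Pi C P (hat1 n).
Proof.
move=> PPi; have hat1P := hat1_partition n_gt0.
pose S Q := \sum_(f : {ffun 'I_n -> 'I_n} | ker_partition f == Q) omega_monomial f.
rewrite -[LHS]/(S P).
rewrite -(mobius_inversion (@refines_refl n) (@refines_trans n) (@refines_anti n) S PPi).
rewrite (bigD1 (hat1 n)) /=; last by rewrite hat1P refines_hat1.
rewrite sum_refining_ker sum_omega_constant mulrC big1 ?addr0 // => Z /andP[/andP[ZPi _] Zn1].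
by rewrite sum_refining_ker sum_omega_proper ?mulr0.
Qed.

End RootOfUnitySums.

Section Expansion.
Variables (C : numClosedFieldType) (A U : algType C).
Variables (phit : U -> C) (iota : nat -> A -> U).
Hypothesis phit_lin : forall a x y, phit (a *: x + y) = a * phit x + phit y.

Lemma K_n_expand n w (X : 'I_n -> A) :
  K_n phit iota w X = n%:R^-1 *
    \sum_(f : {ffun 'I_n -> 'I_n}) omega_monomial w f * phit (\prod_(j < n) iota (f j).+1 (X j)).
Proof.
have phit0 : phit 0 = 0.
  by have /eqP := phit_lin 1 0 0; rewrite scale1r addr0 mul1r -subr_eq subrr eq_sym => /eqP.
have phitD x y : phit (x + y) = phit x + phit y by rewrite -{1}[x]scale1r phit_lin mul1r.
have phitZ a x : phit (a *: x) = a * phit x by rewrite -[a *: x]addr0 phit_lin phit0 addr0.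
rewrite /K_n /X_omega; under eq_bigr do rewrite big_add1 /= big_mkord.
rewrite bigA_distr_bigA /= (big_morph phit phitD phit0); congr (_ * _).
by apply: eq_bigr => f _; rewrite scaler_prod phitZ.
Qed.

End Expansion.

Unset Implicit Arguments. Set Strict Implicit.

Theorem theorem2p5 (C : numClosedFieldType) (A U : algType C)
    (phi : A -> C) (phit : U -> C) (iota : nat -> A -> U)
    (n : nat) (w : C) (X : 'I_n -> A) :
  unital_functional phi ->
  exchangeability_system phi phit iota ->
  (0 < n)%N ->
  n.-primitive_root w ->
  K_n phit iota w X =
  \sum_(P in set_partitions n) phi_pi phit iota P X * @mobius_Pi C n P (hat1 n).
Proof.
move=> _ [[phit_lin _] _ _ exch] n_gt0 w_prim.
rewrite K_n_expand // (partition_big (fun f : {ffun 'I_n -> 'I_n} => ker_partition f)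
                                     (mem (set_partitions n))) => [|f _]; last first.
  exact: ker_partitionP.
rewrite mulr_sumr; apply: eq_bigr => P PPi.
rewrite (eq_bigr (fun f => omega_monomial w f * phi_pi phit iota P X)) => [|f /eqP <-].
  by rewrite -mulr_suml sum_omega_ker // -mulrA mulKf ?pnatr_eq0 -?lt0n // mulrC.
rewrite (phi_pi_kernel exch _ (ker_partitionP f)) // => i j.
by rewrite eqSS mem_pblock_ker.
Qed.
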